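(* (a) Let $H$ be the graph obtained from the cycle $C_5$ by attaching one pendant edge. Then $\chi_i(H)=\chi_{i,2}(H)=4$ and $\chi_{i,1}(H)=5$. (b) For every $n\ge 1$, $\chi_{i,1}(K_{n,n})=2n$.
   Context: An incidence of a graph $G$ is a pair $(v,e)$ with $v\in e\in E(G)$; incidences $(v,e),(u,f)$ are adjacent if $v=u$, or $e=f$, or $vu\in\{e,f\}$; an incidence coloring gives adjacent incidences distinct colors; $\chi_i(G)$ is the least number of colors of an incidence coloring. For an incidence coloring $c$, $S^1_c(v)=\{c(u,uv):uv\in E(G)\}$. A $(k,p)$-incidence coloring is an incidence coloring with at most $k$ colors such that $|S^1_c(v)|\le p$ for every vertex $v$; $\chi_{i,p}(G)$ is the least $k$ for which $G$ admits a $(k,p)$-incidence coloring. *)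

From mathcomp Require Import all_boot.
Set Implicit Arguments. Unset Strict Implicit. Unset Printing Implicit Defensive.

Definition simple_graph (T : finType) (e : rel T) : Prop :=
  (forall x y, e x y = e y x) /\ (forall x, ~~ e x x).

Definition ed (T : finType) (x y : T) : {set T} := [set x; y].

(* Incidence (v, vw) is encoded by the ordered pair (v, w) with e v w. *)
Definition inc_adj (T : finType) (e : rel T) (v w u z : T) : bool :=
  [|| v == u,
      ed v w == ed u z
    | e v u && ((ed v u == ed v w) || (ed v u == ed u z))].

(* c v w is the colour of the incidence (v, vw); colours are 0..k-1,
   i.e. at most k colours are used. *)
Definition incidence_coloring (T : finType) (e : rel T) (k : nat)
    (c : T -> T -> nat) : Prop :=
  (forall v w, e v w -> c v w < k) /\
  (forall v w u z, e v w -> e u z -> (v, w) != (u, z) ->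
     inc_adj e v w u z -> c v w != c u z).

Definition S1 (T : finType) (e : rel T) (c : T -> T -> nat) (v : T) : seq nat :=
  undup [seq c u v | u <- enum T & e u v].

Definition ip_coloring (T : finType) (e : rel T) (k p : nat)
    (c : T -> T -> nat) : Prop :=
  incidence_coloring e k c /\ (forall v, size (S1 e c v) <= p).

Definition i_colorable (T : finType) (e : rel T) (k : nat) : Prop :=
  exists c, incidence_coloring e k c.

Definition ip_colorable (T : finType) (e : rel T) (k p : nat) : Prop :=
  exists c, ip_coloring e k p c.

Definition is_chi_i (T : finType) (e : rel T) (k : nat) : Prop :=
  i_colorable e k /\ forall k', i_colorable e k' -> k <= k'.

Definition is_chi_ip (T : finType) (e : rel T) (p k : nat) : Prop :=
  ip_colorable e k p /\ forall k', ip_colorable e k' p -> k <= k'.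

Definition H_edge_nat (a b : nat) : bool :=
  [|| (a == 0) && (b == 1), (a == 1) && (b == 2), (a == 2) && (b == 3),
      (a == 3) && (b == 4), (a == 4) && (b == 0) | (a == 0) && (b == 5)].

Definition H_rel : rel 'I_6 :=
  fun x y => H_edge_nat x y || H_edge_nat y x.

Definition Knn_rel (n : nat) : rel ('I_n + 'I_n)%type :=
  fun x y => match x, y with
             | inl _, inr _ => true
             | inr _, inl _ => true
             | _, _ => false
             end.

From mathcomp Require Import all_boot.
Set Implicit Arguments. Unset Strict Implicit. Unset Printing Implicit Defensive.

(* The incidences (v, vw) at a vertex v, together with one incidence (u, uv)
   entering v, are pairwise adjacent, so an incidence colouring needs at least
   deg v + 1 colours; for H this gives 4, attained by an explicit colouring
   with at most two colours entering each vertex.  If |S^1_c(v)| <= 1 for all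
   v, the colour of the incidences entering v depends on v alone, and two such
   colours must differ exactly when their heads are at distance 1 or 2: the
   (k,1)-incidence colourings are the proper colourings of the square of the
   graph.  The 5-cycle of H and the whole of K_{n,n} are cliques of the
   square, giving 5 and 2n; colouring the square of H with 5 colours and that
   of K_{n,n} injectively shows these bounds are attained. *)

Lemma ed_eqE (T : finType) (v w u z : T) :
  (ed v w == ed u z) = ((v == u) && (w == z)) || ((v == z) && (w == u)).
Proof.
apply/eqP/idP => [h | /orP [] /andP [/eqP -> /eqP ->] //]; last by rewrite /ed setUC.
have : v \in ed u z by rewrite -h !inE eqxx.
have : w \in ed u z by rewrite -h !inE eqxx orbT.
have : u \in ed v w by rewrite h !inE eqxx.
have : z \in ed v w by rewrite h !inE eqxx orbT.
rewrite !inE; by do 4 (case/orP => /eqP ?); subst; rewrite ?eqxx ?orbT.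
Qed.

Lemma uniq_bounded_size (s : seq nat) k :
  uniq s -> {in s, forall x, x < k} -> size s <= k.
Proof.
move=> s_uniq s_lt; rewrite -(size_iota 0 k); apply: uniq_leq_size => // x.
by move/s_lt; rewrite mem_iota.
Qed.

(* Set-free form of [inc_adj]: unlike finset equality it evaluates under
   [vm_compute], as do [has]/[all] over an explicit enumeration (used below in
   place of [exists]/[forall], whose evaluation is blocked by [card]). *)
Definition inc_adjb (T : eqType) (e : rel T) (v w u z : T) : bool :=
  let same_edge x y x' y' := ((x == x') && (y == y')) || ((x == y') && (y == x')) in
  [|| v == u, same_edge v w u z | e v u && (same_edge v u v w || same_edge v u u z)].

Lemma inc_adjE (T : finType) (e : rel T) (v w u z : T) :
  inc_adj e v w u z = inc_adjb e v w u z.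
Proof. by rewrite /inc_adj 3!ed_eqE. Qed.

Section IncidenceColorings.

Variables (T : finType) (e : rel T).
Hypothesis e_simple : simple_graph e.

Definition square_adj (v w : T) : bool :=
  (v != w) && (e v w || has (fun u => e u v && e u w) (enum T)).

Lemma incidence_coloring_star k c u v (s : seq T) :
  incidence_coloring e k c -> e u v -> uniq s -> all (e v) s -> size s < k.
Proof.
have [_ e_irr] := e_simple.
move=> [c_lt c_adj] euv s_uniq /allP s_nbr.
have neq_uv : u != v by apply: contraTneq euv => ->; apply: e_irr.
rewrite -(size_map (c v)); apply: (@uniq_bounded_size (c u v :: map (c v) s)).
  rewrite /= map_inj_in_uniq ?s_uniq ?andbT.
    apply/mapP => -[w /s_nbr evw]; apply/eqP; apply: c_adj => //.
      by apply: contra neq_uv => /eqP [->].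
    by rewrite /inc_adj euv eqxx !orbT.
  move=> w w' /s_nbr evw /s_nbr evw' /eqP; apply: contraTeq => neq.
  by apply: c_adj => //; [rewrite xpair_eqE eqxx | rewrite /inc_adj eqxx].
by move=> x; rewrite inE => /predU1P [-> | /mapP [w /s_nbr evw ->]]; apply: c_lt.
Qed.

Lemma S1_const (c : T -> T -> nat) v x y :
  size (S1 e c v) <= 1 -> e x v -> e y v -> c x v = c y v.
Proof.
have inS1 z : e z v -> c z v \in S1 e c v.
  by move=> ezv; rewrite mem_undup; apply: map_f; rewrite mem_filter ezv mem_enum.
move=> S1_small /inS1 + /inS1; case: (S1 e c v) S1_small => [|a [|]] //= _.
by rewrite !inE => /eqP -> /eqP ->.
Qed.

Lemma ip1_coloring_square_adj k c x v y w :
  ip_coloring e k 1 c -> square_adj v w -> e x v -> e y w -> c x v != c y w.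
Proof.
have [e_sym _] := e_simple.
move=> [[_ c_adj] S1_small] /andP [neq_vw near] exv eyw.
have neq_pair z z' : (z, v) != (z', w) by rewrite xpair_eqE (negbTE neq_vw) andbF.
case/orP: near => [evw | /hasP [z _ /andP [ezv ezw]]].
- have ewv : e w v by rewrite e_sym.
  rewrite (S1_const (S1_small v) exv ewv) (S1_const (S1_small w) eyw evw).
  apply: c_adj => //.
  by rewrite /inc_adj ed_eqE !eqxx !orbT.
- rewrite (S1_const (S1_small v) exv ezv) (S1_const (S1_small w) eyw ezw).
  by apply: c_adj => //; rewrite /inc_adj eqxx.
Qed.

Lemma ip1_coloring_square_clique k c (s : seq T) :
  ip_coloring e k 1 c -> uniq s -> {in s, forall v, exists u, e u v} ->
  {in s &, forall v w, v != w -> square_adj v w} -> size s <= k.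
Proof.
move=> col s_uniq s_nbr s_clique.
pose nb v := odflt v [pick u | e u v].
have e_nb : {in s, forall v, e (nb v) v}.
  by move=> v /s_nbr [u euv]; rewrite /nb; case: pickP => [u' -> | /(_ u) /negbT/negP].
rewrite -(size_map (fun v => c (nb v) v)); apply: uniq_bounded_size.
  rewrite map_inj_in_uniq // => v w vs ws /eqP; apply: contraTeq => neq.
  exact: ip1_coloring_square_adj col (s_clique v w vs ws neq) (e_nb v vs) (e_nb w ws).
case: col => [[c_lt _] _] x /mapP [v vs ->].
by apply/c_lt/e_nb.
Qed.

Lemma inc_adj_square_adj v w u z :
  e v w -> e u z -> (v, w) != (u, z) -> inc_adj e v w u z -> square_adj w z.
Proof.
have [e_sym e_irr] := e_simple.
have e_neq x y : e x y -> x != y by apply: contraTneq => ->; apply: e_irr.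
move=> evw euz neq; rewrite /inc_adj 3!ed_eqE.
case: (eqVneq v u) => [vu _ | neq_vu /=].
  subst u; rewrite xpair_eqE eqxx /= in neq.
  by rewrite /square_adj neq; apply/orP; right; apply/hasP; exists v; rewrite ?mem_enum ?evw.
rewrite eqxx /=.
case/orP=> [/andP [/eqP vz /eqP wu] | /andP [evu]].
  by rewrite -vz -wu in euz; rewrite -vz /square_adj euz e_neq.
rewrite -orbA; case/or3P=> [/eqP uw | /andP [/eqP vw _] | /andP [/eqP vz _]].
- by rewrite -uw /square_adj euz e_neq.
- by rewrite vw (negbTE (e_irr w)) in evw.
- by rewrite vz e_sym in evw; rewrite /square_adj evw e_neq.
Qed.

Lemma square_coloring_ip1 k (a : T -> nat) :
  (forall w, a w < k) -> (forall v w, square_adj v w -> a v != a w) ->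
  ip_coloring e k 1 (fun _ w => a w).
Proof.
move=> a_lt a_proper; split; first split => // v w u z evw euz neq adj.
  exact/a_proper/(inc_adj_square_adj evw euz neq adj).
move=> v; apply: (@uniq_leq_size _ _ [:: a v]); first exact: undup_uniq.
by move=> x; rewrite mem_undup => /mapP [u _ ->]; rewrite inE.
Qed.

Lemma ip1_colorable_card : ip_colorable e #|T| 1.
Proof.
exists (fun _ w => val (enum_rank w)).
apply: square_coloring_ip1 => [v | v w]; first exact: ltn_ord.
by case/andP=> neq _; apply: contra neq => /eqP /val_inj /enum_rank_inj ->.
Qed.

Definition incidence_coloringb k (c : T -> T -> nat) : bool :=
  all (fun v => all (fun w => e v w ==> (c v w < k)) (enum T)) (enum T) &&
  all (fun v => all (fun w => all (fun u => all (fun z =>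
        [&& e v w, e u z, (v, w) != (u, z) & inc_adjb e v w u z] ==> (c v w != c u z))
      (enum T)) (enum T)) (enum T)) (enum T).

Lemma incidence_coloringP k c :
  reflect (incidence_coloring e k c) (incidence_coloringb k c).
Proof.
apply: (iffP andP) => [[/allP c_lt /allP c_adj] | [c_lt c_adj]]; split.
- move=> v w evw; move/allP: (c_lt v (mem_enum _ v)) => /(_ w (mem_enum _ w)).
  by rewrite evw.
- move=> v w u z evw euz neq adj; move/allP: (c_adj v (mem_enum _ v)).
  move=> /(_ w (mem_enum _ w)) /allP /(_ u (mem_enum _ u)) /allP /(_ z (mem_enum _ z)).
  by rewrite evw euz neq -inc_adjE adj.
- by apply/allP=> v _; apply/allP=> w _; apply/implyP/c_lt.
- apply/allP=> v _; apply/allP=> w _; apply/allP=> u _; apply/allP=> z _.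
  by apply/implyP=> /and4P [evw euz neq]; rewrite -inc_adjE; apply: c_adj.
Qed.

Definition ip_coloringb k p (c : T -> T -> nat) : bool :=
  incidence_coloringb k c && all (fun v => size (S1 e c v) <= p) (enum T).

Lemma ip_coloringP k p c : reflect (ip_coloring e k p c) (ip_coloringb k p c).
Proof.
apply: (iffP andP) => [[/incidence_coloringP col /allP S1_small] | [col S1_small]].
  by split=> // v; apply: S1_small; rewrite mem_enum.
by split; [apply/incidence_coloringP | apply/allP=> v _].
Qed.

End IncidenceColorings.

(* [enum 'I_6] does not reduce under [vm_compute]; this explicit list does. *)
Definition ord6 : seq 'I_6 :=
  [:: @Ordinal 6 0 isT; @Ordinal 6 1 isT; @Ordinal 6 2 isT;
      @Ordinal 6 3 isT; @Ordinal 6 4 isT; @Ordinal 6 5 isT].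

Lemma enum_I6 : enum 'I_6 = ord6.
Proof. by apply: (inj_map val_inj); rewrite val_enum_ord. Qed.

Lemma mem_ord6 (i : 'I_6) : i \in ord6.
Proof. by rewrite -enum_I6 mem_enum. Qed.

Lemma H_simple : simple_graph H_rel.
Proof. by split=> [x y | x]; [rewrite /H_rel orbC | case: x => [[|[|[|[|[|[|]]]]]] ?]]. Qed.

Definition H_table : seq (seq nat) :=
  [:: [:: 0;0;0;0;1;2]; [:: 3;0;1;0;0;0]; [:: 0;0;0;2;0;0];
      [:: 0;0;1;0;0;0]; [:: 3;0;0;2;0;0]; [:: 3;0;0;0;0;0]].

Definition H_coloring42 (v w : 'I_6) : nat := nth 0 (nth [::] H_table v) w.

Lemma H_ip42 : ip_coloring H_rel 4 2 H_coloring42.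
Proof.
apply/ip_coloringP.
by rewrite /ip_coloringb /incidence_coloringb /S1 enum_I6; vm_compute.
Qed.

Definition H_square_coloring (w : 'I_6) : nat := nth 0 [:: 0; 1; 2; 3; 4; 2] w.

Lemma H_ip51 : ip_coloring H_rel 5 1 (fun _ w => H_square_coloring w).
Proof.
apply: (@square_coloring_ip1 _ _ H_simple) => [w | v w].
  by case: w => [[|[|[|[|[|[|]]]]]] ?].
have /allP proper : all (fun v => all (fun w =>
    square_adj H_rel v w ==> (H_square_coloring v != H_square_coloring w)) ord6) ord6.
  by rewrite /square_adj enum_I6; vm_compute.
by move/allP: (proper v (mem_ord6 v)) => /(_ w (mem_ord6 w)) /implyP.
Qed.

Lemma H_incidence_lb k c : incidence_coloring H_rel k c -> 4 <= k.
Proof.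
move=> col; apply: (incidence_coloring_star (u := nth ord0 ord6 1) (v := nth ord0 ord6 0)
  (s := [seq nth ord0 ord6 i | i <- [:: 1; 4; 5]]) H_simple col) => //.
Qed.

Lemma H_ip1_lb k c : ip_coloring H_rel k 1 c -> 5 <= k.
Proof.
move=> col; pose cycle := take 5 ord6.
have /allP nbr : all (fun v => has (H_rel^~ v) ord6) cycle by [].
have /allP clique : all (fun v => all (fun w =>
    (v != w) ==> square_adj H_rel v w) cycle) cycle.
  by rewrite /square_adj enum_I6; vm_compute.
apply: (ip1_coloring_square_clique (s := cycle) H_simple col) => //.
  by move=> v /nbr /hasP [u _ euv]; exists u.
by move=> v w /clique /allP h /h /implyP.
Qed.

Lemma Knn_simple n : simple_graph (@Knn_rel n).
Proof. by split; [case=> x; case=> y | case]. Qed.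

Lemma Knn_ip1_lb n k c : 0 < n -> ip_coloring (@Knn_rel n) k 1 c -> 2 * n <= k.
Proof.
move=> n_gt0 col; pose o := Ordinal n_gt0.
have -> : 2 * n = #|{: 'I_n + 'I_n}| by rewrite card_sum card_ord addnn mul2n.
rewrite cardE; apply: (ip1_coloring_square_clique (Knn_simple n) col (enum_uniq _)).
  by case=> i _; [exists (inr o) | exists (inl o)].
move=> v w _ _ neq; rewrite /square_adj neq /=.
case: v w {neq} => i [j|j] //=; apply/hasP.
  by exists (inr o); rewrite ?mem_enum.
by exists (inl o); rewrite ?mem_enum.
Qed.

Lemma Knn_ip1 n : ip_colorable (@Knn_rel n) (2 * n) 1.
Proof.
have -> : 2 * n = #|{: 'I_n + 'I_n}| by rewrite card_sum card_ord addnn mul2n.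
exact/ip1_colorable_card/Knn_simple.
Qed.

Theorem mainTheorem13 :
  (is_chi_i H_rel 4 /\ is_chi_ip H_rel 2 4 /\ is_chi_ip H_rel 1 5) /\
  (forall n : nat, 1 <= n -> is_chi_ip (@Knn_rel n) 1 (2 * n)).
Proof.
split; [split; [|split] | move=> n n_gt0; split].
- split=> [|k [c /H_incidence_lb //]].
  by exists H_coloring42; case: H_ip42.
- split=> [|k [c [/H_incidence_lb //]]].
  by exists H_coloring42; exact: H_ip42.
- split=> [|k [c /H_ip1_lb //]].
  by exists (fun _ w => H_square_coloring w); exact: H_ip51.
- exact: Knn_ip1.
- by move=> k [c /(Knn_ip1_lb n_gt0)].
Qed.
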